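(* Under the setup below, for every $\mathbf{z}\in\mathbb{R}^V$, \[\mathbf{M}\mathbf{z}=\mathbf{W}^{1/2}\mathbf{B}\,\mathbf{\Pi}^{(0)\top}\cdots\mathbf{\Pi}^{(\eta-1)\top}\mathbf{z}.\]
   Context: Setup. Let $G=(V,E)$ be a connected undirected graph with $|V|=n$ and $m$ edges (parallel edges allowed), positive edge weights $\mathbf{w}$, $\mathbf{W}=\mathrm{diag}(\mathbf{w})$, signed edge–vertex incidence matrix $\mathbf{B}\in\mathbb{R}^{E\times V}$; for a region (edge-induced subgraph) $H$, $\mathbf{B}[H]$ is $\mathbf{B}$ with rows of edges not in $E(H)$ set to zero. All matrices are padded with zeros to act on $\mathbb{R}^V$ (or map into $\mathbb{R}^E$); $\mathbf{I}$ is the $n\times n$ identity and $\mathbf{I}_S$ the diagonal $0/1$ matrix of $S\subseteq V$; $\mathbf{M}_{S,T}$ is the submatrix with rows $S$, columns $T$ (padded); $\mathbf{M}^{-1}$ is the Moore–Penrose pseudoinverse if singular. Separator tree. A separator tree $\mathcal{T}$ of $G$ is a rooted binary tree whose nodes are regions $H$ of $G$, each storing vertex sets $\partial H$ (boundary), $S(H)$ (separator), $F_H$ (eliminated vertices), defined top-down: the root is $H=G$ with $\partial G=\emptyset$ and $F_G=S(G)$. A non-leaf node $H$ has exactly two children $D_1,D_2$ whose edge sets partition $E(H)$, with no isolated vertices, and $V(D_1)\cap V(D_2)=S(H)$; then $\partial D_j=(\partial H\cup S(H))\cap V(D_j)$ for $j=1,2$, and $F_H=S(H)\setminus\partial H$.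 A node with a constant number of edges is a leaf, with $S(H)=\emptyset$ and $F_H=V(H)\setminus\partial H$. The level $\eta(H)$ of a node is the maximum number of edges on a tree path from $H$ down to a descendant (leaves have level 0); $\eta$ is the maximum level (height); $\mathcal{T}(i)$ is the set of nodes at level $i$. The sets $\{F_H\}_{H\in\mathcal{T}}$ partition $V$. Operators. For each node $H$ let $\mathbf{L}^{(H)}$ be a given Laplacian supported on $\partial H\cup F_H$; $\mathbf{X}^{(H)}=\mathbf{L}^{(H)}_{\partial H,F_H}(\mathbf{L}^{(H)}_{F_H,F_H})^{-1}$; $\mathbf{\Pi}^{(i)}=\mathbf{I}-\sum_{H\in\mathcal{T}(i)}\mathbf{X}^{(H)}$ for $0\le i\le\eta-1$. Slack tree operator. For a node $H$ with parent $P$, the edge operator is $\mathbf{M}_{(H,P)}=\mathbf{I}_{\partial H\cup F_H}-(\mathbf{L}^{(H)}_{F_H,F_H})^{-1}\mathbf{L}^{(H)}_{F_H,\partial H}=\mathbf{I}_{\partial H\cup F_H}-\mathbf{X}^{(H)\top}$. For a leaf $H$, the leaf operator is $\mathbf{J}_H=\mathbf{W}^{1/2}\mathbf{B}[H]$. For a leaf $H$ and a node $A$ that is $H$ or an ancestor of $H$, with tree path $H=H_1,H_2,\dots,H_t=A$ ($H_{j+1}$ the parent of $H_j$), let $\mathbf{M}_{H\leftarrow A}=\mathbf{M}_{(H_1,H_2)}\mathbf{M}_{(H_2,H_3)}\cdots\mathbf{M}_{(H_{t-1},H_t)}$ (the identity if $t=1$). Then $\mathbf{M}=\sum_{\text{leaf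 }H,\ \text{node }A:\ H\text{ in the subtree of }A}\mathbf{J}_H\mathbf{M}_{H\leftarrow A}\mathbf{I}_{F_A}$. *)

From HB Require Import structures.
From mathcomp Require Import all_boot all_order all_algebra.
From Stdlib Require Import ClassicalEpsilon.
Set Implicit Arguments.
Unset Strict Implicit.
Unset Printing Implicit Defensive.
Import Order.TTheory GRing.Theory Num.Theory.
Local Open Scope ring_scope.

(* Linear algebra conventions: vertices V = 'I_n, edges E = 'I_m.      *)
(* All matrices acting on R^V are n x n (padded with zeros).           *)

(* Penrose conditions (real matrices: conjugate transpose = transpose). *)
Definition penrose (R : rcfType) n (A X : 'M[R]_n) : Prop :=
  [/\ A *m X *m A = A, X *m A *m X = X,
      (A *m X)^T = A *m X & (X *m A)^T = X *m A].

(* Moore--Penrose pseudoinverse (the unique matrix satisfying the Penrose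
   conditions; it coincides with the inverse when A is invertible). *)
Definition MPinv (R : rcfType) n (A : 'M[R]_n) : 'M[R]_n :=
  epsilon (inhabits 0) (penrose A).

Definition idS (R : rcfType) n (S : {set 'I_n}) : 'M[R]_n :=
  \matrix_(i, j) ((i == j) && (i \in S))%:R.
Arguments idS {R n} S.

Definition subm (R : rcfType) n (S T : {set 'I_n}) (A : 'M[R]_n) : 'M[R]_n :=
  \matrix_(i, j) (if (i \in S) && (j \in T) then A i j else 0).

Definition incidence (R : rcfType) n m (u v : 'I_m -> 'I_n) : 'M[R]_(m, n) :=
  \matrix_(e, x) ((x == u e)%:R - (x == v e)%:R).

Definition restrict_rows (R : rcfType) m n (Er : {set 'I_m})
    (B : 'M[R]_(m, n)) : 'M[R]_(m, n) :=
  \matrix_(e, x) (if e \in Er then B e x else 0).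

Definition sqrtW (R : rcfType) m (w : 'I_m -> R) : 'M[R]_m :=
  diag_mx (\row_e Num.sqrt (w e)).

Definition is_laplacian (R : rcfType) n (L : 'M[R]_n) : Prop :=
  [/\ L^T = L, (forall i j, i != j -> L i j <= 0) &
      (forall i, \sum_j L i j = 0)].

Definition supported_on (R : rcfType) n (L : 'M[R]_n) (S : {set 'I_n}) : Prop :=
  forall i j, L i j != 0 -> (i \in S) && (j \in S).

Definition Vset n m (u v : 'I_m -> 'I_n) (Er : {set 'I_m}) : {set 'I_n} :=
  [set x | [exists e in Er, (u e == x) || (v e == x)]].

Definition adjacent n m (u v : 'I_m -> 'I_n) : rel 'I_n :=
  fun x y => [exists e, ((u e == x) && (v e == y)) || ((u e == y) && (v e == x))].

Definition graph_connected n m (u v : 'I_m -> 'I_n) : Prop :=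
  forall x y, connect (adjacent u v) x y.

Definition anc (T : finType) (par : T -> option T) (k : nat) (H : T) : option T :=
  iter k (fun o => obind par o) (Some H).

Definition children (T : finType) (par : T -> option T) (H : T) : {set T} :=
  [set D | par D == Some H].

Definition is_leaf (T : finType) (par : T -> option T) (H : T) : bool :=
  children par H == set0.

Definition is_anc (T : finType) (par : T -> option T) (A H : T) : bool :=
  [exists k : 'I_#|T|, anc par k H == Some A].

(* number of tree edges on the path from H up to its ancestor A *)
Definition tdist (T : finType) (par : T -> option T) (H A : T) : nat :=
  \max_(k < #|T| | anc par k H == Some A) k.

(* level: maximum number of edges on a tree path from H down to a descendant *)
Definition level (T : finType) (par : T -> option T) (H : T) : nat :=
  \max_(D : T) \max_(k < #|T| | anc par k D == Some H) k.

Definition height (T : finType) (par : T -> option T) : nat :=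
  \max_(H : T) level par H.

Definition Fset n m (u v : 'I_m -> 'I_n) (T : finType) (par : T -> option T)
    (region : T -> {set 'I_m}) (sep bd : T -> {set 'I_n}) (H : T) : {set 'I_n} :=
  if is_leaf par H then Vset u v (region H) :\: bd H else sep H :\: bd H.

Section Operators.
Variables (R : rcfType) (n m : nat) (u v : 'I_m -> 'I_n) (w : 'I_m -> R).
Variables (T : finType) (par : T -> option T) (region : T -> {set 'I_m}).
Variables (sep bd : T -> {set 'I_n}) (L : T -> 'M[R]_n).

Let F := Fset u v par region sep bd.

Definition Xop (H : T) : 'M[R]_n :=
  subm (bd H) (F H) (L H) *m MPinv (subm (F H) (F H) (L H)).

Definition PiOp (i : nat) : 'M[R]_n :=
  1%:M - \sum_(H : T | level par H == i) Xop H.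

Definition PiProdT : 'M[R]_n :=
  foldr (fun i acc => (PiOp i)^T *m acc) 1%:M (iota 0 (height par)).

(* edge operator M_(H,P) = I_{dH u F_H} - X^(H)^T  (depends only on H) *)
Definition Medge (H : T) : 'M[R]_n := idS (bd H :|: F H) - (Xop H)^T.

(* M_{H <- A} where A is the k-th ancestor of H :
   M_(H_1,H_2) M_(H_2,H_3) ... M_(H_k,H_{k+1}) *)
Definition Mpath (H : T) (k : nat) : 'M[R]_n :=
  foldr (fun j acc => Medge (odflt H (anc par j H)) *m acc) 1%:M (iota 0 k).

Definition Jop (H : T) : 'M[R]_(m, n) :=
  sqrtW w *m restrict_rows (region H) (incidence R u v).

Definition slackM : 'M[R]_(m, n) :=
  \sum_(H : T | is_leaf par H) \sum_(A : T | is_anc par A H)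
     Jop H *m Mpath H (tdist par H A) *m idS (F A).

End Operators.

From HB Require Import structures.
From mathcomp Require Import all_boot all_order all_algebra.
From Stdlib Require Import ClassicalEpsilon.
Set Implicit Arguments.
Unset Strict Implicit.
Unset Printing Implicit Defensive.
Import Order.TTheory GRing.Theory Num.Theory.

(* Write x = Pi^(0)T ... Pi^(eta-1)T z.  The factor Pi^(i)T only changes the
   coordinates in the sets F_H with H of level i; these sets are pairwise
   disjoint, and X^(H)T only reads coordinates of the boundary of H, which lie
   in sets F_B of strictly higher level.  Hence x_i = z_i - (X^(A)T x)_i for
   every i in F_A.  With this, induction down the separator tree shows that
   the sum over the ancestors A' of A of M_{A<-A'} I_{F_A'} z equals
   I_{bd A u F_A} x.  A leaf operator J_H only sees the vertices of H, which
   lie in bd H u F_H, and the regions of the leaves partition the edges, so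
   M z = sum_H J_H x = W^(1/2) B x. *)

Section RootedTree.
Variables (T : finType) (root : T) (par : T -> option T).
Hypothesis par_root : par root = None.
Hypothesis anc_root : forall H, exists k, anc par k H = Some root.

Lemma iter_obind_None k : iter k (fun o => obind par o) None = None.
Proof. by elim: k => //= k ->. Qed.

Lemma ancS k H : anc par k.+1 H = obind par (anc par k H).
Proof. by []. Qed.

Lemma ancSr k H : anc par k.+1 H = if par H is Some P then anc par k P else None.
Proof. by rewrite /anc iterSr /=; case: (par H); rewrite ?iter_obind_None. Qed.

Lemma ancD a b H : anc par (a + b) H = obind (anc par a) (anc par b H).
Proof.
elim: a => [|a IH]; first by case: (anc par b H).
by rewrite addSn ancS IH; case: (anc par b H).
Qed.

Lemma anc_None_leq j k H : anc par j H = None -> j <= k -> anc par k H = None.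
Proof. by move=> hj /subnK <-; rewrite ancD hj. Qed.

Lemma ancS_root k : anc par k.+1 root = None.
Proof. by rewrite ancSr par_root. Qed.

Lemma ancS_par k H A : anc par k.+1 H = Some A ->
  exists2 D, anc par k H = Some D & par D = Some A.
Proof. by rewrite ancS; case: (anc par k H) => [D|] //= hD; exists D. Qed.

(* Two different distances would make A its own proper ancestor, hence
   periodic under [anc], which contradicts reaching the root. *)
Lemma anc_inj k k' H A : anc par k H = Some A -> anc par k' H = Some A -> k = k'.
Proof.
wlog le_kk' : k k' / k <= k'.
  move=> W h h'; case: (leqP k k') => [le|/ltnW le]; first exact: W.
  by symmetry; apply: W h' h.
move=> h h'; apply/eqP; rewrite eqn_leq le_kk' leqNgt; apply/negP => lt_kk'.
set d := k' - k.
have cycA t : anc par (t * d) A = Some A.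
  elim: t => [|t IH] //; rewrite mulSn ancD IH /=.
  by rewrite -h' -(subnK le_kk') ancD h.
have [e he] := anc_root A.
have : anc par (e.+1 * d) A = None.
  apply: (@anc_None_leq e.+1); first by rewrite ancS he /= par_root.
  by rewrite leq_pmulr // subn_gt0.
by rewrite cycA.
Qed.

Lemma anc_lt_card k H A : anc par k H = Some A -> k < #|T|.
Proof.
move=> hk; have [e he] := anc_root H.
have eS_None : anc par e.+1 H = None by rewrite ancS he /= par_root.
have le_ke : k <= e.
  by rewrite leqNgt; apply/negP => /(anc_None_leq eS_None); rewrite hk.
have anc_Some (j : 'I_e.+1) : {D | anc par j H = Some D}.
  case hj: (anc par j H) => [D|]; first by exists D.
  by have := anc_None_leq hj (ltn_ord j : j <= e); rewrite he.
pose f j := sval (anc_Some j).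
have f_inj : injective f.
  move=> i j; rewrite /f; case: (anc_Some i) => D hi; case: (anc_Some j) => D' hj /= eqD.
  by apply: val_inj; apply: (anc_inj hi); rewrite hj eqD.
by apply: leq_trans _ (leq_card f f_inj); rewrite card_ord ltnS.
Qed.

Lemma is_ancP A H : reflect (exists k, anc par k H = Some A) (is_anc par A H).
Proof.
apply: (iffP existsP) => [[k /eqP hk]|[k hk]]; first by exists k.
by exists (Ordinal (anc_lt_card hk)); apply/eqP.
Qed.

Lemma is_anc_refl H : is_anc par H H.
Proof. by apply/is_ancP; exists 0. Qed.

Lemma is_anc_root H : is_anc par root H.
Proof. exact/is_ancP/anc_root. Qed.

Lemma is_anc_par D P H : par D = Some P -> is_anc par D H -> is_anc par P H.
Proof. by move=> hD /is_ancP[k hk]; apply/is_ancP; exists k.+1; rewrite ancS hk. Qed.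

Lemma is_anc_child A H : is_anc par A H -> H != A ->
  exists2 D, par D = Some A & is_anc par D H.
Proof.
move=> /is_ancP[[|k] hk] neHA; first by case: hk => eHA; rewrite eHA eqxx in neHA.
by have [D hD hpD] := ancS_par hk; exists D => //; apply/is_ancP; exists k.
Qed.

Lemma is_anc_siblings D1 D2 A H : par D1 = Some A -> par D2 = Some A ->
  is_anc par D1 H -> is_anc par D2 H -> D1 = D2.
Proof.
move=> hD1 hD2 /is_ancP[k1 hk1] /is_ancP[k2 hk2].
have e1 : anc par k1.+1 H = Some A by rewrite ancS hk1.
have e2 : anc par k2.+1 H = Some A by rewrite ancS hk2.
by case: (anc_inj e1 e2) => ek; move: hk1; rewrite ek hk2 => -[].
Qed.

Lemma is_anc_parE A P A' : par A = Some P -> is_anc par A' A = (A' == A) || is_anc par A' P.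
Proof.
move=> hA; apply/idP/idP => [/is_ancP[[|k] hk]|/orP[/eqP->|/is_ancP[k hk]]].
- by case: hk => ->; rewrite eqxx.
- by apply/orP; right; apply/is_ancP; exists k; rewrite -hk ancSr hA.
- exact: is_anc_refl.
- by apply/is_ancP; exists k.+1; rewrite ancSr hA.
Qed.

Lemma children_par D1 D2 H : children par H = [set D1; D2] ->
  par D1 = Some H /\ par D2 = Some H.
Proof.
move=> hc; have inC D : D \in [set D1; D2] -> par D = Some H.
  by rewrite -hc inE => /eqP.
by split; apply: inC; rewrite !inE eqxx ?orbT.
Qed.

Lemma is_anc_children C D1 D2 H : children par C = [set D1; D2] -> H != C ->
  is_anc par C H = is_anc par D1 H || is_anc par D2 H.
Proof.
move=> hc neHC; have [hD1 hD2] := children_par hc.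
apply/idP/orP => [hCH|]; last by case=> [/(is_anc_par hD1)|/(is_anc_par hD2)].
have [D hD hDH] := is_anc_child hCH neHC.
have : D \in children par C by rewrite inE hD.
by rewrite hc !inE => /orP[] /eqP eD; [left | right]; rewrite -eD.
Qed.

Lemma tdistE k H A : anc par k H = Some A -> tdist par H A = k.
Proof.
move=> hk; rewrite /tdist (big_pred1 (Ordinal (anc_lt_card hk))) //.
move=> j /=; apply/eqP/eqP => [hj|->//]; apply: val_inj => /=.
exact: anc_inj hj hk.
Qed.

Lemma level_geq k D H : anc par k D = Some H -> k <= level par H.
Proof.
move=> hk; apply: leq_trans (leq_bigmax D).
by apply: (@leq_bigmax_cond _ _ _ (Ordinal (anc_lt_card hk))); apply/eqP.
Qed.

Lemma level_par_lt H P : par H = Some P -> level par H < level par P.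
Proof.
move=> hp; have lvlP_gt0 : 0 < level par P by apply: (@level_geq 1 H); rewrite ancSr hp.
rewrite -(prednK lvlP_gt0) ltnS; apply/bigmax_leqP => D _; apply/bigmax_leqP => k /eqP hk.
by rewrite -ltnS prednK //; apply: (@level_geq k.+1 D); rewrite ancS hk.
Qed.

Lemma level_anc k H A : anc par k H = Some A -> level par H + k <= level par A.
Proof.
elim: k H => [|k IH] H; first by move=> [->]; rewrite addn0.
rewrite ancSr; case hp: (par H) => [P|] // hk.
by rewrite addnS; apply: leq_trans (IH _ hk); rewrite -addSn leq_add2r level_par_lt.
Qed.

Lemma is_anc_level A H : is_anc par A H -> level par H <= level par A.
Proof. by move=> /is_ancP[k /level_anc]; apply: leq_trans; rewrite leq_addr. Qed.

Lemma level_le_height H : level par H <= height par.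
Proof. exact: leq_bigmax. Qed.

End RootedTree.

Lemma Vset_subset n m (u v : 'I_m -> 'I_n) (A B : {set 'I_m}) :
  A \subset B -> Vset u v A \subset Vset u v B.
Proof.
move=> sAB; apply/subsetP => x; rewrite !inE => /existsP[e /andP[eA he]].
by apply/existsP; exists e; rewrite (subsetP sAB).
Qed.

Section SeparatorTree.
Variables (n m : nat) (u v : 'I_m -> 'I_n).
Variables (T : finType) (root : T) (par : T -> option T).
Variables (region : T -> {set 'I_m}) (sep bd : T -> {set 'I_n}).
Hypothesis par_root : par root = None.
Hypothesis anc_root : forall H, exists k, anc par k H = Some root.
Hypothesis split_node : forall H, ~~ is_leaf par H ->
  exists D1 D2,
    [/\ D1 != D2, children par H = [set D1; D2],
        region D1 :&: region D2 = set0,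
        region D1 :|: region D2 = region H &
        Vset u v (region D1) :&: Vset u v (region D2) = sep H].
Hypothesis bd_rootE : bd root = set0.
Hypothesis bd_parE : forall D H, par D = Some H ->
  bd D = (bd H :|: sep H) :&: Vset u v (region D).

Local Notation F := (Fset u v par region sep bd).
Local Notation V X := (Vset u v (region X)).

Lemma par_nonleaf D H : par D = Some H -> ~~ is_leaf par H.
Proof. by move=> hD; apply/set0Pn; exists D; rewrite inE hD. Qed.

Lemma region_par_subset D H : par D = Some H -> region D \subset region H.
Proof.
move=> hD; have [D1 [D2 [_ hc _ hU _]]] := split_node (par_nonleaf hD).
have : D \in children par H by rewrite inE hD.
by rewrite hc -hU !inE => /orP[] /eqP ->; rewrite ?subsetUl ?subsetUr.
Qed.

Lemma sep_siblings D1 D2 H : par D1 = Some H -> par D2 = Some H -> D1 != D2 ->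
  sep H = V D1 :&: V D2.
Proof.
move=> hD1 hD2 ne12; have [E1 [E2 [_ hc _ _ <-]]] := split_node (par_nonleaf hD1).
have : D1 \in children par H by rewrite inE hD1.
have : D2 \in children par H by rewrite inE hD2.
rewrite hc !inE => /orP[] /eqP e2 /orP[] /eqP e1; subst D1 D2;
  by rewrite ?eqxx // setIC in ne12 *.
Qed.

Lemma Vset_anc_subset A D : is_anc par A D -> V D \subset V A.
Proof.
move=> /(is_ancP par_root anc_root)[k]; elim: k D => [|k IH] D; first by move=> [->].
rewrite ancSr; case hD: (par D) => [P|] // hk.
exact: subset_trans (Vset_subset u v (region_par_subset hD)) (IH _ hk).
Qed.

Lemma Fset_nonleaf H : ~~ is_leaf par H -> F H = sep H :\: bd H.
Proof. by rewrite /Fset => /negbTE ->. Qed.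

Lemma Fset_sub_Vset H : F H \subset V H.
Proof.
rewrite /Fset; case: ifP => leafH; first exact: subsetDl.
have [D1 [D2 [_ hc _ _ <-]]] := split_node (negbT leafH).
have [hD1 _] := children_par hc.
apply: subset_trans (subsetDl _ _) (subset_trans (subsetIl _ _) _).
by apply: Vset_subset; apply: region_par_subset.
Qed.

Lemma Fset_bd i H : i \in F H -> i \notin bd H.
Proof. by rewrite /Fset; case: ifP => _; rewrite inE => /andP[]. Qed.

Lemma bd_par_subset D P : par D = Some P -> bd D \subset bd P :|: F P.
Proof.
move=> hD; rewrite (bd_parE hD) (Fset_nonleaf (par_nonleaf hD)).
apply/subsetP => i; rewrite !inE => /andP[/orP[->|->] _] //.
by rewrite andbT; case: (i \in bd P).
Qed.

Lemma bd_anc_Vset A D i : is_anc par A D -> i \in bd A -> i \in V D -> i \in bd D.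
Proof.
move=> /(is_ancP par_root anc_root)[k]; elim: k D => [|k IH] D; first by move=> [->].
rewrite ancSr; case hD: (par D) => [P|] // hk iA iD.
have iP : i \in V P by apply: subsetP (Vset_subset u v (region_par_subset hD)) _ iD.
by rewrite (bd_parE hD) in_setI in_setU (IH _ hk iA iP) iD.
Qed.

Lemma Fset_below C D i : i \in F C -> is_anc par C D -> D != C -> i \notin F D.
Proof.
move=> iC hCD neDC; apply/negP => iD.
have [D' hD' hD'D] := is_anc_child par_root anc_root hCD neDC.
have iVD : i \in V D := subsetP (Fset_sub_Vset D) _ iD.
have iD' : i \in V D' := subsetP (Vset_anc_subset hD'D) _ iVD.
have ibdD' : i \in bd D'.
  move: iC; rewrite (Fset_nonleaf (par_nonleaf hD')) (bd_parE hD') in_setD.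
  by rewrite in_setI in_setU iD' => /andP[_ ->]; rewrite orbT.
by have := Fset_bd iD; rewrite (bd_anc_Vset hD'D ibdD' iVD).
Qed.

Lemma Fset_disjoint_below N C : level par C < N -> forall H H' i,
  is_anc par C H -> is_anc par C H' -> i \in F H -> i \in F H' -> H = H'.
Proof.
elim: N C => [//|N IH] C lvlC H H' i hH hH' iH iH'.
case: (eqVneq H C) => [eHC|neHC].
  subst H; case: (eqVneq H' C) => [//|neH'C].
  by have := Fset_below iH hH' neH'C; rewrite iH'.
case: (eqVneq H' C) => [eH'C|neH'C].
  by subst H'; have := Fset_below iH' hH neHC; rewrite iH.
have [D hD hDH] := is_anc_child par_root anc_root hH neHC.
have [D' hD' hD'H'] := is_anc_child par_root anc_root hH' neH'C.
case: (eqVneq D D') => [eDD'|neDD'].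
  subst D'; apply: (IH D) hDH hD'H' iH iH'.
  by rewrite -ltnS; apply: leq_trans lvlC; rewrite ltnS (level_par_lt par_root anc_root hD).
have iVH X : i \in F X -> i \in V X := subsetP (Fset_sub_Vset X) i.
have iD : i \in V D := subsetP (Vset_anc_subset hDH) _ (iVH _ iH).
have iD' : i \in V D' := subsetP (Vset_anc_subset hD'H') _ (iVH _ iH').
have ibdD : i \in bd D.
  by rewrite (bd_parE hD) (sep_siblings hD hD' neDD') in_setI in_setU in_setI iD iD' orbT.
by have := Fset_bd iH; rewrite (bd_anc_Vset hDH ibdD (iVH _ iH)).
Qed.

Lemma Fset_disjoint H H' i : i \in F H -> i \in F H' -> H = H'.
Proof.
exact: (Fset_disjoint_below (ltnSn (level par root))) (is_anc_root par_root anc_root H)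
  (is_anc_root par_root anc_root H').
Qed.

Lemma bd_sub_Fset_higher A i : i \in bd A ->
  exists2 B, level par A < level par B & i \in F B.
Proof.
have [e he] := anc_root A; elim: e A he => [|e IH] A he iA.
  by move: iA; case: he => ->; rewrite bd_rootE inE.
move: he; rewrite ancSr; case hA: (par A) => [P|] // he.
have lvlAP := level_par_lt par_root anc_root hA.
have := subsetP (bd_par_subset hA) _ iA; rewrite inE => /orP[iP|iP]; last by exists P.
by have [B lvlPB iB] := IH P he iP; exists B => //; apply: ltn_trans lvlPB.
Qed.

Lemma Fset_notin_par A P i : par A = Some P -> i \in F A -> i \notin bd P :|: F P.
Proof.
move=> hA iA; have lvlAP := level_par_lt par_root anc_root hA.
rewrite in_setU negb_or; apply/andP; split; apply/negP => iP.
  have [B lvlPB iB] := bd_sub_Fset_higher iP.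
  by rewrite (Fset_disjoint iB iA) ltnNge ltnW in lvlPB.
by rewrite (Fset_disjoint iP iA) ltnn in lvlAP.
Qed.

End SeparatorTree.

Local Open Scope ring_scope.

Section Pseudoinverse.
Variable R : rcfType.

Lemma row_free_gram_unit r k (D : 'M[R]_(r, k)) : row_free D -> D *m D^T \in unitmx.
Proof.
move=> freeD; rewrite -row_free_unit; apply: inj_row_free => x hx.
have xD0 : x *m D = 0.
  have := congr1 (mulmx^~ x^T) hx.
  rewrite mul0mx mulmxA -mulmxA -trmx_mul => /matrixP/(_ 0 0)/eqP.
  rewrite !mxE psumr_eq0 => [|j _].
    move=> /allP sq0; apply/rowP => j; have := sq0 j (mem_index_enum _).
    by rewrite !mxE -expr2 sqrf_eq0 => /eqP.
  by rewrite !mxE -expr2 sqr_ge0.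
by apply: (row_free_inj freeD); rewrite xD0 mul0mx.
Qed.

Lemma penrose_rank_factor k r (C : 'M[R]_(k, r)) (D : 'M[R]_(r, k)) :
  row_free D -> row_free C^T ->
  penrose (C *m D) (D^T *m invmx (D *m D^T) *m invmx (C^T *m C) *m C^T).
Proof.
move=> freeD freeCt.
have unitDD := row_free_gram_unit freeD.
have unitCC := row_free_gram_unit freeCt; rewrite trmxK in unitCC.
set GD := D *m D^T in unitDD *; set GC := C^T *m C in unitCC *.
have symGD : GD^T = GD by rewrite /GD trmx_mul trmxK.
have symGC : GC^T = GC by rewrite /GC trmx_mul trmxK.
have AX : C *m D *m (D^T *m invmx GD *m invmx GC *m C^T) = C *m invmx GC *m C^T.
  by rewrite !mulmxA -(mulmxA C D) -/GD mulmxK.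
have XA : D^T *m invmx GD *m invmx GC *m C^T *m (C *m D) = D^T *m invmx GD *m D.
  by rewrite !mulmxA -(mulmxA _ C^T C) -/GC mulmxKV.
split.
- by rewrite AX !mulmxA -(mulmxA _ C^T C) -/GC mulmxKV.
- by rewrite XA !mulmxA -(mulmxA _ D D^T) -/GD mulmxKV.
- by rewrite AX !trmx_mul trmxK trmx_inv symGC mulmxA.
- by rewrite XA !trmx_mul trmxK trmx_inv symGD mulmxA.
Qed.

Lemma penrose_exists k (A : 'M[R]_k) : exists X, penrose A X.
Proof.
have freeCt : row_free (col_base A)^T.
  by rewrite /row_free mxrank_tr; have := col_base_full A; rewrite /row_full.
have := penrose_rank_factor (row_base_free A) freeCt.
by rewrite mulmx_base => h; eexists; exact: h.
Qed.

Lemma MPinv_penrose k (A : 'M[R]_k) : penrose A (MPinv A).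
Proof. by apply: epsilon_spec; apply: penrose_exists. Qed.

(* From X = X X^T A^T. *)
Lemma penrose_col_zero k (A X : 'M[R]_k) (S : {set 'I_k}) : penrose A X ->
  (forall i j, i \notin S -> A i j = 0) -> forall i j, j \notin S -> X i j = 0.
Proof.
move=> [_ XAX AXsym _] A0 i j jS.
have -> : X = X *m X^T *m A^T by rewrite -mulmxA -trmx_mul AXsym mulmxA XAX.
by rewrite mxE big1 // => l _; rewrite [A^T _ _]mxE A0 ?mulr0.
Qed.

End Pseudoinverse.

Section CoordinateProjections.
Variable R : rcfType.

Lemma idS_diag k (S : {set 'I_k}) : idS S = diag_mx (\row_i (i \in S)%:R) :> 'M[R]_k.
Proof.
by apply/matrixP => i j; rewrite !mxE; case: eqVneq => [->|]; rewrite ?mulr1n ?mulr0n.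
Qed.

Lemma mul_idS_mx k p (S : {set 'I_k}) (M : 'M[R]_(k, p)) i j :
  (idS S *m M) i j = if i \in S then M i j else 0.
Proof. by rewrite idS_diag mul_diag_mx !mxE; case: (i \in S); rewrite ?mul1r ?mul0r. Qed.

Lemma mul_mx_idS k p (S : {set 'I_k}) (M : 'M[R]_(p, k)) i j :
  (M *m idS S) i j = if j \in S then M i j else 0.
Proof. by rewrite idS_diag mul_mx_diag !mxE; case: (j \in S); rewrite ?mulr1 ?mulr0. Qed.

Lemma restrict_rowsU m p (E1 E2 : {set 'I_m}) (B : 'M[R]_(m, p)) :
  E1 :&: E2 = set0 ->
  restrict_rows (E1 :|: E2) B = restrict_rows E1 B + restrict_rows E2 B.
Proof.
move=> /setP disj; apply/matrixP => e j; rewrite !mxE in_setU.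
have := disj e; rewrite !inE.
by case: (e \in E1); case: (e \in E2) => //= _; rewrite ?addr0 ?add0r.
Qed.

End CoordinateProjections.

Lemma mulmx_tr_col (R : pzRingType) k p (A : 'M[R]_(k, p)) (y : 'cV[R]_k) i :
  (A^T *m y) i 0 = \sum_j A j i * y j 0.
Proof. by rewrite mxE; apply: eq_bigr => j _; rewrite mxE. Qed.

Lemma foldr_mulmx_iotaS (R : pzRingType) p (g g' : nat -> 'M[R]_p) s k :
  (forall j, (s <= j < s + k)%N -> g j.+1 = g' j) ->
  foldr (fun j acc => g j *m acc) 1%:M (iota s.+1 k) =
  foldr (fun j acc => g' j *m acc) 1%:M (iota s k).
Proof.
elim: k s => [//|k IH] s h /=.
rewrite h ?leqnn ?addnS ?ltnS ?leq_addr //; congr (_ *m _).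
by apply: IH => j /andP[sj jk]; apply: h; rewrite ltnW //= addnS -addSn.
Qed.

Section SlackOperator.
Variables (R : rcfType) (n m : nat) (u v : 'I_m -> 'I_n) (w : 'I_m -> R).
Variables (T : finType) (root : T) (par : T -> option T).
Variables (region : T -> {set 'I_m}) (sep bd : T -> {set 'I_n}).
Variable L : T -> 'M[R]_n.
Hypothesis par_root : par root = None.
Hypothesis anc_root : forall H, exists k, anc par k H = Some root.
Hypothesis region_rootE : region root = [set: 'I_m].
Hypothesis split_node : forall H, ~~ is_leaf par H ->
  exists D1 D2,
    [/\ D1 != D2, children par H = [set D1; D2],
        region D1 :&: region D2 = set0,
        region D1 :|: region D2 = region H &
        Vset u v (region D1) :&: Vset u v (region D2) = sep H].
Hypothesis bd_rootE : bd root = set0.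
Hypothesis bd_parE : forall D H, par D = Some H ->
  bd D = (bd H :|: sep H) :&: Vset u v (region D).

Local Notation F := (Fset u v par region sep bd).
Local Notation X := (Xop u v par region sep bd L).
Local Notation Pi := (PiOp u v par region sep bd L).
Local Notation eta := (height par).

Let anc_rootP := is_ancP par_root anc_root.
Let Fset_disj := Fset_disjoint par_root anc_root split_node bd_parE.

Lemma Xop_bd H i j : i \notin bd H -> X H i j = 0.
Proof. by move=> iH; rewrite mxE big1 // => k _; rewrite mxE (negbTE iH) mul0r. Qed.

Lemma Xop_Fset H i j : j \notin F H -> X H i j = 0.
Proof.
move=> jH; rewrite mxE big1 // => k _.
rewrite (penrose_col_zero (MPinv_penrose _) (S := F H)) ?mulr0 // => a b aH.
by rewrite mxE (negbTE aH).
Qed.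

Lemma XopT_Fset H (y : 'cV[R]_n) i : i \notin F H -> ((X H)^T *m y) i 0 = 0.
Proof. by move=> iH; rewrite mulmx_tr_col big1 // => j _; rewrite Xop_Fset ?mul0r. Qed.

Lemma XopT_bd H (y y' : 'cV[R]_n) i : {in bd H, forall j, y j 0 = y' j 0} ->
  ((X H)^T *m y) i 0 = ((X H)^T *m y') i 0.
Proof.
move=> eq_yy'; rewrite !mulmx_tr_col; apply: eq_bigr => j _.
by case: (boolP (j \in bd H)) => [/eq_yy'->|jH] //; rewrite Xop_bd ?mul0r.
Qed.

Lemma PiOpT_col k (y : 'cV[R]_n) i :
  ((Pi k)^T *m y) i 0 = y i 0 - \sum_(H | level par H == k) ((X H)^T *m y) i 0.
Proof.
rewrite /PiOp linearB linear_sum /= trmx1 mulmxBl mul1mx mulmx_suml.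
by rewrite !mxE summxE.
Qed.

Definition PiSuffixT k := foldr (fun i acc => (Pi i)^T *m acc) 1%:M (iota k (eta - k)).

Lemma PiSuffixT_lt k : (k < eta)%N -> PiSuffixT k = (Pi k)^T *m PiSuffixT k.+1.
Proof. by move=> lt_k; rewrite /PiSuffixT -subnSK. Qed.

Lemma PiSuffixT_ge k : (eta <= k)%N -> PiSuffixT k = 1%:M.
Proof. by rewrite /PiSuffixT -subn_eq0 => /eqP ->. Qed.

Lemma PiSuffixT0 : PiSuffixT 0 = PiProdT u v par region sep bd L.
Proof. by rewrite /PiSuffixT subn0. Qed.

Variable z : 'cV[R]_n.
Let zs k := PiSuffixT k *m z.
Let x := PiProdT u v par region sep bd L *m z.

Lemma zs_notin_level k i : (forall H, level par H = k -> i \notin F H) ->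
  zs k i 0 = zs k.+1 i 0.
Proof.
move=> notinF; case: (ltnP k eta) => lt_k; last by rewrite /zs !PiSuffixT_ge // ltnW.
rewrite /zs PiSuffixT_lt // -mulmxA PiOpT_col big1 ?subr0 // => H /eqP lvlH.
exact/XopT_Fset/notinF.
Qed.

(* Only the factor of level [level A] moves the coordinates in [F A]. *)
Lemma zs_stable A i a b : i \in F A -> (a <= b)%N ->
  (level par A < a)%N \/ (b <= level par A)%N -> zs a i 0 = zs b i 0.
Proof.
move=> iA /subnKC <-; elim: (b - a)%N => [|d IH] hout; first by rewrite addn0.
rewrite addnS -zs_notin_level.
  by apply: IH; case: hout => [?|]; [left | rewrite addnS => /ltnW; right].
move=> H lvlH; apply/negP => iH; rewrite (Fset_disj iH iA) in lvlH.
by case: hout; rewrite lvlH ?ltnNge ?leq_addr // addnS ltnn.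
Qed.

Lemma zs0 : zs 0 = x.
Proof. by rewrite /zs PiSuffixT0. Qed.

Lemma zs_height : zs eta = z.
Proof. by rewrite /zs PiSuffixT_ge // mul1mx. Qed.

Lemma zs_level A i : i \in F A -> (level par A < eta)%N ->
  zs (level par A) i 0 = zs (level par A).+1 i 0 - ((X A)^T *m zs (level par A).+1) i 0.
Proof.
move=> iA lt_lvl; rewrite /zs PiSuffixT_lt // -mulmxA PiOpT_col (bigD1 A) //=.
rewrite big1 ?addr0 // => H /andP[_ neHA]; apply: XopT_Fset.
by apply: contra neHA => iH; rewrite (Fset_disj iH iA).
Qed.

(* The coordinates read by [(X A)^T] lie in [bd A], hence in [F] sets of
   strictly higher level: they are untouched by the factors of level at most
   [level A]. *)
Lemma PiProdT_Fset A i : i \in F A -> x i 0 = z i 0 - ((X A)^T *m x) i 0.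
Proof.
move=> iA; have bd_higher := bd_sub_Fset_higher par_root anc_root bd_rootE bd_parE (A := A).
have XAx : ((X A)^T *m x) i 0 = ((X A)^T *m zs (level par A).+1) i 0.
  apply: XopT_bd => j /bd_higher[B lvlAB jB].
  by rewrite -zs0 (zs_stable jB (b := (level par A).+1)) //; right.
rewrite XAx -zs0; have [lt_lvl|ge_lvl] := ltnP (level par A) eta.
  rewrite (zs_stable iA (b := level par A)) //; last by right.
  by rewrite zs_level // -zs_height (zs_stable iA (a := (level par A).+1) lt_lvl) //; left.
rewrite (XopT_bd (y' := 0)); last first.
  move=> j /bd_higher[B lvlAB _].
  by have := leq_ltn_trans ge_lvl lvlAB; rewrite ltnNge level_le_height.
rewrite mulmx0 [(0 : 'cV[R]_n) i 0]mxE subr0.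
by rewrite (zs_stable iA (b := eta)) ?zs_height //; right.
Qed.

Local Notation Me := (Medge u v par region sep bd L).
Local Notation Mp := (Mpath u v par region sep bd L).

Lemma MpathS A P k B : par A = Some P -> anc par k P = Some B ->
  Mp A k.+1 = Me A *m Mp P k.
Proof.
move=> hA hk; rewrite /Mpath /=; congr (_ *m _).
apply: foldr_mulmx_iotaS => j; rewrite add0n => /andP[_ lt_jk].
rewrite ancSr hA; case hj: (anc par j P) => [C|] //.
by have := anc_None_leq hj (ltnW lt_jk); rewrite hk.
Qed.

Definition slack_col A :=
  \sum_(A' | is_anc par A' A) Mp A (tdist par A A') *m idS (F A') *m z.

Lemma slack_col_root : slack_col root = idS (F root) *m z.
Proof.
rewrite /slack_col (big_pred1 root) => [|A'].
  by rewrite (tdistE par_root anc_root (k := 0)) // mul1mx.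
apply/anc_rootP/eqP => [[[|k] hk]|->]; last by exists 0.
  by case: hk.
by rewrite ancS_root in hk.
Qed.

Lemma slack_col_par A P : par A = Some P ->
  slack_col A = idS (F A) *m z + Me A *m slack_col P.
Proof.
move=> hA; rewrite /slack_col (bigD1 A) ?(is_anc_refl par_root anc_root) //=.
rewrite (tdistE par_root anc_root (k := 0)) // mul1mx; congr (_ + _).
rewrite (eq_bigl (is_anc par ^~ P)) => [|A']; last first.
  rewrite (is_anc_parE par_root anc_root _ hA); case: eqVneq => [->|_]; rewrite ?andbT //=.
  symmetry; apply/negbTE/negP.
  move=> /(is_anc_level par_root anc_root); rewrite leqNgt.
  by rewrite (level_par_lt par_root anc_root hA).
rewrite mulmx_sumr; apply: eq_bigr => A' /anc_rootP[k hk].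
have hkA : anc par k.+1 A = Some A' by rewrite ancSr hA.
rewrite (tdistE par_root anc_root hkA) (tdistE par_root anc_root hk).
by rewrite (MpathS hA hk) !mulmxA.
Qed.

(* On [F A] this is [PiProdT_Fset]; on [bd A], [Medge A] copies the
   coordinates of the parent, which contain [bd A]. *)
Lemma slack_colE A : slack_col A = idS (bd A :|: F A) *m x.
Proof.
have [e he] := anc_root A; elim: e A he => [|e IH] A he.
  case: he => ->; rewrite slack_col_root bd_rootE set0U.
  apply/colP => i; rewrite !mul_idS_mx; case: ifP => // iF.
  rewrite (PiProdT_Fset iF) (XopT_bd (y' := 0)) => [|j]; last by rewrite bd_rootE inE.
  by rewrite mulmx0 [(0 : 'cV[R]_n) i 0]mxE subr0.
move: he; rewrite ancSr; case hA: (par A) => [P|] // he.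
rewrite (slack_col_par hA) (IH _ he) /Medge mulmxBl.
apply/colP => i; rewrite [(_ + _ : 'cV[R]_n) i 0]mxE [(_ - _ : 'cV[R]_n) i 0]mxE
  [(- _ : 'cV[R]_n) i 0]mxE !mul_idS_mx.
have bdAP := bd_par_subset bd_parE hA.
have -> : ((X A)^T *m (idS (bd P :|: F P) *m x)) i 0 = ((X A)^T *m x) i 0.
  by apply: XopT_bd => j /(subsetP bdAP) jP; rewrite mul_idS_mx jP.
have [iA|iA] := boolP (i \in F A).
  rewrite (negbTE (Fset_notin_par par_root anc_root split_node bd_rootE bd_parE hA iA)).
  by rewrite in_setU iA orbT sub0r (PiProdT_Fset iA).
rewrite XopT_Fset // subr0 add0r in_setU (negbTE iA) orbF.
by case: ifP => // /(subsetP bdAP) ->.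
Qed.

Lemma restrict_rows_leaves p (B : 'M[R]_(m, p)) N C : (level par C < N)%N ->
  \sum_(H | is_leaf par H && is_anc par C H) restrict_rows (region H) B =
  restrict_rows (region C) B.
Proof.
elim: N C => [//|N IH] C lvlC.
have [leafC|nleafC] := boolP (is_leaf par C).
  rewrite (big_pred1 C) // => H /=; apply/andP/eqP => [[_ hCH]|->]; last first.
    by rewrite leafC (is_anc_refl par_root anc_root).
  apply/eqP/negPn/negP => neHC; have [D hD _] := is_anc_child par_root anc_root hCH neHC.
  by rewrite (negbTE (par_nonleaf hD)) in leafC.
have [D1 [D2 [ne12 hc disj12 <- _]]] := split_node nleafC.
have [hD1 hD2] := children_par hc.
have lvlD D : par D = Some C -> (level par D < N)%N.
  by move=> hD; apply: leq_trans (level_par_lt par_root anc_root hD) _; rewrite -ltnS.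
have anc_split H : is_leaf par H -> is_anc par C H = is_anc par D1 H || is_anc par D2 H.
  move=> leafH; apply: (is_anc_children par_root anc_root hc).
  by apply: contraNneq nleafC => <-.
have anc_excl H : is_anc par D1 H -> ~~ is_anc par D2 H.
  move=> h1; apply: contra ne12 => h2.
  by rewrite (is_anc_siblings par_root anc_root hD1 hD2 h1 h2).
rewrite restrict_rowsU // -(IH _ (lvlD _ hD1)) -(IH _ (lvlD _ hD2)).
rewrite (bigID (is_anc par D1)) /=.
congr (_ + _); apply: eq_bigl => H; case: (boolP (is_leaf par H)) => //= leafH.
  by rewrite (anc_split H leafH); case: (is_anc par D1 H); rewrite ?andbT ?andbF.
rewrite (anc_split H leafH); case: (boolP (is_anc par D1 H)) => [/anc_excl/negbTE -> | _] //=.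
by rewrite andbT.
Qed.

Lemma Jop_mul_idS H : is_leaf par H ->
  Jop u v w region H *m idS (bd H :|: F H) = Jop u v w region H.
Proof.
move=> leafH; rewrite /Jop -mulmxA; congr (_ *m _).
apply/matrixP => e j; rewrite mul_mx_idS; case: ifP => // jH.
rewrite mxE; case: ifP => // eH; rewrite mxE.
have endpoint y : (y == u e) || (y == v e) -> y \in bd H :|: F H.
  move=> hy; rewrite in_setU /Fset leafH in_setD; case: (y \in bd H) => //=.
  rewrite inE; apply/existsP; exists e; rewrite eH.
  by case/orP: hy => /eqP ->; rewrite eqxx ?orbT.
have nju : (j == u e) = false by apply: contraFF jH => hj; apply: endpoint; rewrite hj.
have njv : (j == v e) = false by apply: contraFF jH => hj; apply: endpoint; rewrite hj orbT.
by rewrite nju njv subrr.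
Qed.

Lemma slackM_mul : slackM u v w par region sep bd L *m z =
  sqrtW w *m incidence R u v *m PiProdT u v par region sep bd L *m z.
Proof.
rewrite -mulmxA -/x.
have leaf_term H : is_leaf par H ->
    (\sum_(A | is_anc par A H) Jop u v w region H *m Mp H (tdist par H A) *m idS (F A))
      *m z = sqrtW w *m restrict_rows (region H) (incidence R u v) *m x.
  move=> leafH; transitivity (Jop u v w region H *m slack_col H).
    by rewrite /slack_col mulmx_suml mulmx_sumr; apply: eq_bigr => A _; rewrite !mulmxA.
  by rewrite slack_colE mulmxA Jop_mul_idS.
rewrite /slackM mulmx_suml (eq_bigr _ leaf_term) -mulmx_suml -mulmx_sumr.
rewrite (eq_bigl (fun H => is_leaf par H && is_anc par root H)) => [|H]; last first.
  by rewrite (is_anc_root par_root anc_root) andbT.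
rewrite (restrict_rows_leaves _ (ltnSn _)) region_rootE.
by congr (_ *m _ *m _); apply/matrixP => e j; rewrite mxE inE.
Qed.

End SlackOperator.

Theorem mainTheorem14 (R : rcfType) (n m : nat)
    (u v : 'I_m -> 'I_n) (w : 'I_m -> R)
    (T : finType) (root : T) (par : T -> option T)
    (region : T -> {set 'I_m}) (sep bd : T -> {set 'I_n})
    (L : T -> 'M[R]_n) :
  (forall e, u e != v e) ->
  (forall e, 0 < w e) ->
  graph_connected u v ->
  par root = None ->
  (forall H, H != root -> par H != None) ->
  (forall H, exists k, anc par k H = Some root) ->
  region root = [set: 'I_m] ->
  (forall H, ~~ is_leaf par H ->
     exists D1 D2,
       [/\ D1 != D2, children par H = [set D1; D2],
           region D1 :&: region D2 = set0,
           region D1 :|: region D2 = region H &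
           Vset u v (region D1) :&: Vset u v (region D2) = sep H]) ->
  (forall H, is_leaf par H -> sep H = set0) ->
  bd root = set0 ->
  (forall D H, par D = Some H ->
     bd D = (bd H :|: sep H) :&: Vset u v (region D)) ->
  (forall H, is_laplacian (L H) /\
     supported_on (L H) (bd H :|: Fset u v par region sep bd H)) ->
  forall z : 'cV[R]_n,
    slackM u v w par region sep bd L *m z =
    sqrtW w *m incidence R u v *m PiProdT u v par region sep bd L *m z.
Proof.
move=> _ _ _ par_root _ anc_root region_rootE split_node _ bd_rootE bd_parE _ z.
exact: (slackM_mul w L par_root anc_root region_rootE split_node bd_rootE bd_parE z).
Qed.
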